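(* Let $\Delta$ be a finite, flag, simply connected simplicial complex, with $\mathcal{P}_H$, $q$, $T$, $p_n$, $L$ and $\Phi_n$ as in the context. Then for all $e\in\mathrm{Edge}(\Delta)$ and all $n\in\mathbb{Z}$, $\mathrm{Area}_{\mathcal{P}_H}\big(\Phi_n(e\overline{e})\big)\le(2L+1)|n|+1$.
   Context: $\mathrm{Edge}(\Delta)$ is the set of directed edges of $\Delta$; for $e$ in it, $\iota e$, $\tau e$ are its initial and terminal vertices and $\overline{e}$ is the reversed edge. $e_1\cdot\ldots\cdot e_l$ is a combinatorial path if $\tau e_i=\iota e_{i+1}$, and a combinatorial 1-cycle if also $\tau e_l=\iota e_1$. $\mathcal{P}_H=\langle\mathrm{Edge}(\Delta)\mid\mathcal{R}_H\rangle$ where $\mathcal{R}_H$ consists of the words $e\overline{e}$ ($e\in\mathrm{Edge}(\Delta)$) and $efg$, $e^{-1}f^{-1}g^{-1}$ for every combinatorial 1-cycle $e\cdot f\cdot g$ (a finite presentation of the Bestvina–Brady group $H_\Delta$). For a word $w$ over $\mathrm{Edge}(\Delta)^{\pm1}$ representing the identity, $\mathrm{Area}_{\mathcal{P}_H}(w)$ is the least $m$ such that $w$ is freely equal to $\prod_{i=1}^m x_ir_ix_i^{-1}$ with $r_i\in\mathcal{R}_H^{\pm1}$. For a letter $e$ and $m\in\mathbb{Z}$, $e^m$ denotes the word of $m$ copies of $e$ if $m\ge0$ and $|m|$ copies of $e^{-1}$ if $m<0$. Fix a vertex $q$ and a spanning tree $T$ of the 1-skeleton of $\Delta$; $p_n(u,v)=e_1^n\cdots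 e_l^n$ where $e_1\cdot\ldots\cdot e_l$ is the unique geodesic combinatorial path in $T$ from $u$ to $v$. $L$ is the maximum, over pairs of vertices $u,v$, of the edge-path distance between $u$ and $v$ in $T$. For $n\in\mathbb{Z}$, $\Phi_n$ is the endomorphism of the free monoid on $\mathrm{Edge}(\Delta)^{\pm1}$ given by $\Phi_n(e)=p_n(q,\iota e)\,e^{n+1}\,p_n(\tau e,q)$ and $\Phi_n(e^{-1})=\Phi_n(e)^{-1}$ (formal inverse word). *)

From Stdlib Require Import Relation_Operators.
From mathcomp Require Import all_boot all_order all_algebra.
Set Implicit Arguments. Unset Strict Implicit. Unset Printing Implicit Defensive.

Definition is_simplicial_complex (V : finType) (D : {set {set V}}) : Prop :=
  [/\ (forall s : {set V}, s \in D -> s != set0),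
      (forall s t : {set V}, s \in D -> t \subset s -> t != set0 -> t \in D) &
      (forall v : V, [set v] \in D)].

Definition is_flag (V : finType) (D : {set {set V}}) : Prop :=
  forall s : {set V}, s != set0 ->
    (forall x y, x \in s -> y \in s -> x != y -> [set x; y] \in D) -> s \in D.

Definition is_edge (V : finType) (D : {set {set V}}) (e : V * V) : bool :=
  (e.1 != e.2) && ([set e.1; e.2] \in D).

Definition Edge (V : finType) (D : {set {set V}}) := {e : V * V | is_edge D e}.

Definition iota_e (V : finType) (D : {set {set V}}) (e : Edge D) : V := (sval e).1.
Definition tau_e (V : finType) (D : {set {set V}}) (e : Edge D) : V := (sval e).2.

Lemma is_edge_rev (V : finType) (D : {set {set V}}) (e : V * V) :
  is_edge D e -> is_edge D (e.2, e.1).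
Proof. by rewrite /is_edge /= eq_sym setUC. Qed.

Definition ebar (V : finType) (D : {set {set V}}) (e : Edge D) : Edge D :=
  exist _ ((sval e).2, (sval e).1) (is_edge_rev (proj2_sig e)).

Fixpoint epath (V : finType) (D : {set {set V}}) (P : Edge D -> bool)
    (u v : V) (p : seq (Edge D)) : Prop :=
  match p with
  | [::] => u = v
  | e :: p' => [/\ P e, iota_e e = u & epath P (tau_e e) v p']
  end.

Definition ep_step (V : finType) (D : {set {set V}}) (p p' : seq (Edge D)) : Prop :=
  (exists a b (e : Edge D), p = a ++ e :: ebar e :: b /\ p' = a ++ b) \/
  (exists a b (e f g : Edge D),
      [/\ tau_e e = iota_e f, iota_e g = iota_e e, tau_e g = tau_e f,
          [set iota_e e; tau_e e; tau_e f] \in D &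
          p = a ++ e :: f :: b /\ p' = a ++ g :: b]).

Definition simply_connected (V : finType) (D : {set {set V}}) : Prop :=
  [/\ exists v : V, True,
      (forall u v : V, exists p, epath (fun _ : Edge D => true) u v p) &
      (forall (v : V) p, epath (fun _ : Edge D => true) v v p ->
         clos_refl_sym_trans _ (@ep_step V D) p [::])].

Definition in_tree (V : finType) (D : {set {set V}}) (T : {set {set V}})
  (e : Edge D) : bool := [set iota_e e; tau_e e] \in T.

Definition is_spanning_tree (V : finType) (D : {set {set V}}) (T : {set {set V}})
  : Prop :=
  [/\ (forall t, t \in T -> (t \in D) && (#|t| == 2)),
      (forall u v : V, exists p : seq (Edge D), epath (in_tree T) u v p) &
      ~ (exists s : seq V, [/\ 3 <= size s, uniq s &
            cycle (fun x y => [set x; y] \in T) s])].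

Definition is_Tgeodesic (V : finType) (D : {set {set V}}) (T : {set {set V}})
  (u v : V) (p : seq (Edge D)) : Prop :=
  epath (in_tree T) u v p /\
  forall p' : seq (Edge D), epath (in_tree T) u v p' -> size p <= size p'.

Definition Lmax (V : finType) (D : {set {set V}}) (gp : V -> V -> seq (Edge D)) : nat :=
  \max_(u : V) \max_(w : V) size (gp u w).

Definition letter (V : finType) (D : {set {set V}}) := (Edge D * bool)%type.
(* (e, true) is the letter e, (e, false) is e^{-1} *)
Definition word (V : finType) (D : {set {set V}}) := seq (letter D).

Definition linv (V : finType) (D : {set {set V}}) (x : letter D) : letter D :=
  (x.1, ~~ x.2).
Definition winv (V : finType) (D : {set {set V}}) (w : word D) : word D :=
  rev (map (@linv V D) w).

Definition free_step (V : finType) (D : {set {set V}}) (u v : word D) : Prop :=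
  exists a b (x : letter D), u = a ++ x :: linv x :: b /\ v = a ++ b.

Definition freely_eq (V : finType) (D : {set {set V}}) : word D -> word D -> Prop :=
  clos_refl_sym_trans _ (@free_step V D).

Definition is_relator (V : finType) (D : {set {set V}}) (r : word D) : Prop :=
  (exists e : Edge D, r = [:: (e, true); (ebar e, true)]) \/
  (exists e f g : Edge D,
     [/\ tau_e e = iota_e f, tau_e f = iota_e g, tau_e g = iota_e e &
         (r = [:: (e, true); (f, true); (g, true)] \/
          r = [:: (e, false); (f, false); (g, false)])]).

Definition is_relator_pm (V : finType) (D : {set {set V}}) (r : word D) : Prop :=
  is_relator r \/ is_relator (winv r).

Definition vk_decomp (V : finType) (D : {set {set V}}) (w : word D) (m : nat) : Prop :=
  exists cs : seq (word D * word D),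
    [/\ size cs = m,
        (forall i, i < size cs -> is_relator_pm (nth ([::], [::]) cs i).2) &
        freely_eq w (flatten [seq c.1 ++ c.2 ++ winv c.1 | c <- cs])].

(* Area_{P_H}(w) <= k  (Area is the least m with vk_decomp w m) *)
Definition area_le (V : finType) (D : {set {set V}}) (w : word D) (k : nat) : Prop :=
  exists m, m <= k /\ vk_decomp w m.

Definition lpow (V : finType) (D : {set {set V}}) (x : letter D) (m : int) : word D :=
  match m with
  | Posz k => nseq k x
  | Negz k => nseq k.+1 (linv x)
  end.

Definition pn (V : finType) (D : {set {set V}}) (gp : V -> V -> seq (Edge D))
  (n : int) (u v : V) : word D :=
  flatten [seq lpow (e, true) n | e <- gp u v].

Definition Phi_letter (V : finType) (D : {set {set V}}) (gp : V -> V -> seq (Edge D))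
  (q : V) (n : int) (x : letter D) : word D :=
  let w := pn gp n q (iota_e x.1) ++ lpow (x.1, true) (n + 1)%R
           ++ pn gp n (tau_e x.1) q in
  if x.2 then w else winv w.

Definition Phi (V : finType) (D : {set {set V}}) (gp : V -> V -> seq (Edge D))
  (q : V) (n : int) (w : word D) : word D :=
  flatten [seq Phi_letter gp q n x | x <- w].

(* Phi_n(e ebar(e)) = p_n(q, i e) e^(n+1) p_n(t e, q) p_n(q, t e) ebar(e)^(n+1) p_n(i e, q).
   Geodesics in the tree T are unique, so p_n(q, v) is p_n(v, q) read backwards
   along reversed edges.  The relators f ebar(f) let the middle of the word cancel
   from the inside out: first p_n(t e, q) p_n(q, t e) at the cost of |n| relators
   per edge, then e^(n+1) ebar(e)^(n+1) at the cost of |n+1|, and finally the outer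
   pair p_n(q, i e) ... p_n(i e, q).  Each geodesic has at most L edges. *)
From Stdlib Require Import Relation_Operators.
From mathcomp Require Import all_boot all_order all_algebra zify.
Set Implicit Arguments. Unset Strict Implicit. Unset Printing Implicit Defensive.

Section VanKampen.
Variables (V : finType) (D : {set {set V}}).
Implicit Types (u v w x y : word D) (cs : seq (word D * word D)).

Lemma linvK (a : letter D) : linv (linv a) = a.
Proof. by case: a => a b; rewrite /linv /= negbK. Qed.

Lemma winv_cat x y : winv (x ++ y) = winv y ++ winv x.
Proof. by rewrite /winv map_cat rev_cat. Qed.

Lemma winv_cons a x : winv (a :: x) = winv x ++ [:: linv a].
Proof. by rewrite /winv /= rev_cons cats1. Qed.

Lemma winvK x : winv (winv x) = x.
Proof. by rewrite /winv map_rev revK -map_comp (eq_map linvK) map_id. Qed.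

Lemma freely_eq_refl u : freely_eq u u.
Proof. exact: rst_refl. Qed.

Lemma freely_eq_sym u v : freely_eq u v -> freely_eq v u.
Proof. exact: rst_sym. Qed.

Lemma freely_eq_trans u v w : freely_eq u v -> freely_eq v w -> freely_eq u w.
Proof. exact: rst_trans. Qed.

Lemma freely_eq_congr x y u v :
  freely_eq u v -> freely_eq (x ++ u ++ y) (x ++ v ++ y).
Proof.
elim=> [u' v' [a [b [c [-> ->]]]]|u'|u' v' _ IH|u' v' w' _ IH1 _ IH2].
- by apply: rst_step; exists (x ++ a), (b ++ y), c; rewrite -!catA.
- exact: freely_eq_refl.
- exact: freely_eq_sym.
- exact: freely_eq_trans IH1 IH2.
Qed.

Lemma freely_eq_cat u u' v v' :
  freely_eq u u' -> freely_eq v v' -> freely_eq (u ++ v) (u' ++ v').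
Proof.
move=> Hu Hv; apply: (@freely_eq_trans _ (u' ++ v)).
  by have := freely_eq_congr [::] v Hu.
by have := freely_eq_congr u' [::] Hv; rewrite !cats0.
Qed.

Lemma freely_eq_cancel x a b : freely_eq (a ++ x ++ winv x ++ b) (a ++ b).
Proof.
elim: x a b => [|c x IH] a b; first exact: freely_eq_refl.
rewrite winv_cons /=; apply: (@freely_eq_trans _ (a ++ c :: linv c :: b)).
  by have := IH (a ++ [:: c]) (linv c :: b); rewrite -!catA.
by apply: rst_step; exists a, b, c.
Qed.

Lemma freely_eq_cancel_inv x a b : freely_eq (a ++ winv x ++ x ++ b) (a ++ b).
Proof. by have := freely_eq_cancel (winv x) a b; rewrite winvK. Qed.

Definition conj_prod cs : word D := flatten [seq c.1 ++ c.2 ++ winv c.1 | c <- cs].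

Lemma conj_prod_conj x cs :
  freely_eq (x ++ conj_prod cs ++ winv x) (conj_prod [seq (x ++ c.1, c.2) | c <- cs]).
Proof.
elim: cs => [|c cs IH].
  by have := freely_eq_cancel x [::] [::]; rewrite /= cats0.
rewrite /conj_prod /= -/(conj_prod cs) -/(conj_prod [seq _ | _ <- cs]) winv_cat.
apply: freely_eq_sym; apply: (@freely_eq_trans _
  (x ++ c.1 ++ c.2 ++ winv c.1 ++ winv x ++ x ++ conj_prod cs ++ winv x)).
  have := freely_eq_congr (x ++ c.1 ++ c.2 ++ winv c.1 ++ winv x) [::]
    (freely_eq_sym IH).
  by rewrite !cats0 -!catA.
have := freely_eq_cancel_inv x (x ++ c.1 ++ c.2 ++ winv c.1) (conj_prod cs ++ winv x).
by rewrite -!catA.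
Qed.

Lemma vk_decomp_nil : vk_decomp (@nil (letter D)) 0.
Proof. by exists [::]; split => //; exact: freely_eq_refl. Qed.

Lemma vk_decomp_relator (r : word D) : is_relator_pm r -> vk_decomp r 1.
Proof.
move=> Hr; exists [:: ([::], r)]; split => //; first by case.
by rewrite /= /winv /= !cats0; exact: freely_eq_refl.
Qed.

Lemma vk_decomp_freely_eq w w' m :
  freely_eq w w' -> vk_decomp w' m -> vk_decomp w m.
Proof. by move=> Hw [cs [? ? Hf]]; exists cs; split => //; exact: freely_eq_trans Hw Hf. Qed.

Lemma vk_decomp_cat w1 w2 m1 m2 :
  vk_decomp w1 m1 -> vk_decomp w2 m2 -> vk_decomp (w1 ++ w2) (m1 + m2).
Proof.
move=> [cs1 [Hs1 Hr1 Hf1]] [cs2 [Hs2 Hr2 Hf2]]; exists (cs1 ++ cs2); split.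
- by rewrite size_cat Hs1 Hs2.
- move=> i; rewrite size_cat nth_cat; case: ifP => [Hi _|/negbT]; first exact: Hr1.
  by rewrite -leqNgt => Hi1 Hi; apply: Hr2; rewrite ltn_subLR.
- by rewrite map_cat flatten_cat; exact: freely_eq_cat.
Qed.

Lemma vk_decomp_conj w m x : vk_decomp w m -> vk_decomp (x ++ w ++ winv x) m.
Proof.
move=> [cs [Hs Hr Hf]]; exists [seq (x ++ c.1, c.2) | c <- cs]; split.
- by rewrite size_map.
- by move=> i; rewrite size_map => Hi; rewrite (nth_map ([::], [::])) //; exact: Hr.
- apply: freely_eq_trans (conj_prod_conj x cs).
  exact: (freely_eq_congr x (winv x) Hf).
Qed.

(* x w y is freely equal to the conjugate (x w x^-1) followed by x y. *)
Lemma vk_decomp_insert x w y m1 m2 :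
  vk_decomp w m1 -> vk_decomp (x ++ y) m2 -> vk_decomp (x ++ w ++ y) (m1 + m2).
Proof.
move=> Hw Hxy; apply: (@vk_decomp_freely_eq _ ((x ++ w ++ winv x) ++ x ++ y)).
  by apply: freely_eq_sym; have := freely_eq_cancel_inv x (x ++ w) y; rewrite -!catA.
by apply: vk_decomp_cat => //; exact: vk_decomp_conj.
Qed.

End VanKampen.

Section EdgePaths.
Variables (V : finType) (D : {set {set V}}).
Implicit Types (f g h : Edge D) (p : seq (Edge D)).

Lemma edge_inj f g : iota_e f = iota_e g -> tau_e f = tau_e g -> f = g.
Proof.
move=> Hi Ht; apply: val_inj; move: Hi Ht.
by case: f g => [[a b] ?] [[c d] ?]; rewrite /iota_e /tau_e /= => -> ->.
Qed.

Lemma ebarK f : ebar (ebar f) = f.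
Proof. exact: edge_inj. Qed.

Lemma edge_neq f : iota_e f != tau_e f.
Proof. by case/andP: (proj2_sig f). Qed.

Definition erev p := rev (map (@ebar V D) p).

Lemma erevK p : erev (erev p) = p.
Proof. by rewrite /erev map_rev revK -map_comp (eq_map ebarK) map_id. Qed.

Lemma size_erev p : size (erev p) = size p.
Proof. by rewrite size_rev size_map. Qed.

Lemma erev_cons f p : erev (f :: p) = rcons (erev p) (ebar f).
Proof. by rewrite /erev /= rev_cons. Qed.

Definition reduced p := sorted (fun f g => g != ebar f) p.

Lemma reduced_erev p : reduced p -> reduced (erev p).
Proof.
rewrite /reduced /erev rev_sorted sorted_map; apply: sub_sorted => f g /=.
by rewrite ebarK eq_sym.
Qed.

Lemma epath_cat (P : pred (Edge D)) u v a b :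
  epath P u v (a ++ b) <-> exists w, epath P u w a /\ epath P w v b.
Proof.
elim: a u => [|g a IH] u /=; first by split=> [Hb|[w [-> Hb]]]; first exists u.
split=> [[Pg Hg /IH [w [Ha Hb]]]|[w [[Pg Hg Ha] Hb]]]; first by exists w.
by split=> //; apply/IH; exists w.
Qed.

Lemma epath_last (P : pred (Edge D)) u v p :
  epath P u v p -> last u (map (@tau_e V D) p) = v.
Proof. by elim: p u => [|g p IH] u /=; [|case=> _ _ /IH]. Qed.

Lemma geodesic_reduced (P : pred (Edge D)) u v p :
  epath P u v p -> (forall p', epath P u v p' -> size p <= size p') -> reduced p.
Proof.
elim: p u => [|g p IH] u //= [Pg Hg Hp] Hmin.
case: p IH Hp Hmin => [|h p] //= IH Hhp Hmin; apply/andP; split.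
  apply/eqP => Eh; case: Hhp => _ _ Hp; have Hpu : epath P u v p.
    by rewrite -Hg -[iota_e g]/(tau_e (ebar g)) -Eh.
  by have := Hmin p Hpu => /=; lia.
by apply: (IH (tau_e g)) => // p' Hp'; have := Hmin (g :: p'); apply.
Qed.

Variable T : {set {set V}}.

Definition tree_adj (x y : V) : bool := [set x; y] \in T.

Lemma epath_erev u v p :
  epath (in_tree T) u v p -> epath (in_tree T) v u (erev p).
Proof.
elim: p u => [|g p IH] u /=; first by move->.
case=> Tg Hg /IH Hp; rewrite erev_cons -cats1; apply/epath_cat; exists (tau_e g).
by split=> //=; rewrite /in_tree /iota_e /tau_e /= setUC.
Qed.

Lemma epath_tree_adj u v p :
  epath (in_tree T) u v p -> path tree_adj u (map (@tau_e V D) p).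
Proof. by elim: p u => [|g p IH] u //= [Tg <- /IH ->]; rewrite andbT. Qed.

Hypothesis acyclic : ~ (exists s : seq V, [/\ 3 <= size s, uniq s &
  cycle (fun x y => [set x; y] \in T) s]).

Lemma tree_cycle_small x s :
  uniq (x :: s) -> path tree_adj x s -> tree_adj (last x s) x -> size s <= 1.
Proof.
move=> Us Ps Cs; rewrite leqNgt; apply/negP => s_big; apply: acyclic.
by exists (x :: s); split => //; rewrite /cycle rcons_path Ps.
Qed.

(* If the start vertex recurs, the loop back to it is a cycle in T, so by
   acyclicity it has length 2 and is a backtrack. *)
Lemma reduced_uniq_vertices u v p :
  epath (in_tree T) u v p -> reduced p -> uniq (u :: map (@tau_e V D) p).
Proof.
elim: p u => [|f p IH] u // [Tf <- Hp] red.
have Up := IH _ Hp (path_sorted red).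
rewrite [map _ _]/= cons_uniq Up andbT inE negb_or edge_neq /=; apply/negP => Hin.
have [s1 [s2 Es]] : exists s1 s2, map (@tau_e V D) p = s1 ++ iota_e f :: s2.
  by case/splitPr: Hin => s1 s2; exists s1, s2.
have := epath_tree_adj Hp; rewrite Es cat_path => /andP [P1 /andP [A1 _]].
move: Up; rewrite Es -cat_cons cat_uniq => /and3P [U1 /norP [N1 _] _].
have : size (tau_e f :: s1) <= 1.
  apply: (@tree_cycle_small (iota_e f)) => //; first by rewrite cons_uniq N1 U1.
  by rewrite /= P1 andbT; exact: Tf.
case: s1 {P1 A1 U1 N1} Es => // Es _.
case: p {IH Hin} Hp red Es => [|h p] //= [_ Hh _] /andP [Nh _] [Th _].
by case/eqP: Nh; apply: edge_inj.
Qed.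

Lemma reduced_closed_nil u p : epath (in_tree T) u u p -> reduced p -> p = [::].
Proof.
move=> Hp red; have := reduced_uniq_vertices Hp red.
case: p Hp {red} => [|g p] // Hp /andP [Nu _].
by have := epath_last Hp; rewrite /= => Hl; move: Nu; rewrite -{1}Hl mem_last.
Qed.

Lemma reduced_tree_path_unique u v p p' :
  epath (in_tree T) u v p -> epath (in_tree T) u v p' ->
  reduced p -> reduced p' -> p = p'.
Proof.
elim: p u p' => [|f a IH] u p' Hp Hp' red red'.
  by move: Hp => /= Huv; subst v; rewrite (reduced_closed_nil Hp' red').
case: p' Hp' red' => [|f' a'] Hp' red'.
  by move: Hp' => /= Huv; subst v; rewrite (reduced_closed_nil Hp red).
have [Ef|Nf] := eqVneq f f'.
  subst f'; case: Hp Hp' => [_ _ Ha] [_ _ Ha']; congr (_ :: _).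
  exact: IH _ _ Ha Ha' (path_sorted red) (path_sorted red').
have Hloop : epath (in_tree T) v v (erev (f' :: a') ++ f :: a).
  by apply/epath_cat; exists u; split; [exact: epath_erev|].
have red_loop : reduced (erev (f' :: a') ++ f :: a).
  rewrite /reduced sorted_cat_cons; apply/andP; split; last exact: red.
  have -> : rcons (erev (f' :: a')) f = erev (ebar f :: f' :: a').
    by rewrite [RHS]erev_cons ebarK.
  by apply: reduced_erev; rewrite /reduced /= ebarK eq_sym Nf.
by have := reduced_closed_nil Hloop red_loop; rewrite erev_cons; case: (erev a').
Qed.

Lemma tree_geodesic_rev (gp : V -> V -> seq (Edge D)) u v :
  (forall x y, is_Tgeodesic T x y (gp x y)) -> gp v u = erev (gp u v).
Proof.
move=> geo; have red x y : reduced (gp x y) by case: (geo x y); exact: geodesic_reduced.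
apply: reduced_tree_path_unique (geo v u).1 (epath_erev (geo u v).1) _ _ => //.
exact: reduced_erev.
Qed.

End EdgePaths.

Section Area.
Variables (V : finType) (D : {set {set V}}).

Definition pow_path (n : int) (p : seq (Edge D)) : word D :=
  flatten [seq lpow (f, true) n | f <- p].

Lemma vk_decomp_nseq (a b : letter D) j :
  is_relator_pm [:: a; b] -> vk_decomp (nseq j a ++ nseq j b) j.
Proof.
move=> Hr; elim: j => [|j IH]; first exact: vk_decomp_nil.
have -> : nseq j.+1 b = nseq j b ++ [:: b] by rewrite -addn1 nseqD.
have := vk_decomp_insert (x := [:: a]) (y := [:: b]) IH (vk_decomp_relator Hr).
by rewrite addn1 /= -!catA.
Qed.

Lemma vk_decomp_lpow (f : Edge D) m :
  vk_decomp (lpow (f, true) m ++ lpow (ebar f, true) m) `|m|.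
Proof.
case: m => k /=; apply: vk_decomp_nseq; first by left; left; exists f.
by right; left; exists (ebar f); rewrite /winv /= ebarK.
Qed.

Lemma vk_decomp_pow_path n (p : seq (Edge D)) :
  vk_decomp (pow_path n p ++ pow_path n (erev p)) (`|n| * size p).
Proof.
elim: p => [|f p IH]; first by rewrite muln0; exact: vk_decomp_nil.
have -> : pow_path n (erev (f :: p)) = pow_path n (erev p) ++ lpow (ebar f, true) n.
  by rewrite erev_cons /pow_path map_rcons flatten_rcons.
have := vk_decomp_insert IH (vk_decomp_lpow f n).
by rewrite /= mulnS addnC -!catA.
Qed.

End Area.

Lemma size_le_Lmax (V : finType) (D : {set {set V}}) (gp : V -> V -> seq (Edge D)) u v :
  size (gp u v) <= Lmax gp.
Proof.
apply: leq_trans (leq_bigmax u); exact: (leq_bigmax (F := fun w => size (gp u w)) v).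
Qed.

Theorem lemma4p2 (V : finType) (D : {set {set V}}) (T : {set {set V}}) (q : V)
  (gp : V -> V -> seq (Edge D)) :
  is_simplicial_complex D -> is_flag D -> simply_connected D ->
  is_spanning_tree D T ->
  (forall u v : V, is_Tgeodesic T u v (gp u v)) ->
  forall (e : Edge D) (n : int),
    area_le (Phi gp q n [:: (e, true); (ebar e, true)])
            ((2 * Lmax gp + 1) * `|n|%N + 1).
Proof.
move=> _ _ _ [_ _ acyclic] geo e n.
set P := gp (tau_e e) q; set Q := gp (iota_e e) q.
have -> : Phi gp q n [:: (e, true); (ebar e, true)] =
    pow_path n (erev Q) ++
    (lpow (e, true) (n + 1) ++ (pow_path n P ++ pow_path n (erev P)) ++
     lpow (ebar e, true) (n + 1)) ++ pow_path n Q.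
  rewrite /Phi /= /Phi_letter /= /pn cats0 -!catA.
  by rewrite !(tree_geodesic_rev acyclic _ q geo).
have inner := vk_decomp_insert (vk_decomp_pow_path n P) (vk_decomp_lpow e (n + 1)).
have outer := vk_decomp_pow_path n (erev Q); rewrite erevK size_erev in outer.
eexists; split; last exact: vk_decomp_insert inner outer.
have HP : `|n| * size P <= `|n| * Lmax gp by rewrite leq_mul2l size_le_Lmax orbT.
have HQ : `|n| * size Q <= `|n| * Lmax gp by rewrite leq_mul2l size_le_Lmax orbT.
lia.
Qed.
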